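(* Assume the following two hypotheses. (Grimm's conjecture) For all integers $n\ge 1$ and $k\ge 1$ such that $n+1,\dots,n+k$ are all composite, there exist distinct primes $P_1,\dots,P_k$ with $P_i\mid (n+i)$ for $1\le i\le k$. (Smooth numbers in short intervals) For every $\varepsilon>0$ there is a constant $c_\varepsilon>0$ such that for all sufficiently large real $x$, $\Psi(x+x^{\varepsilon},x^{\varepsilon})-\Psi(x,x^{\varepsilon})\ge c_\varepsilon x^{\varepsilon}$. Then for every $\varepsilon>0$, $p_{i+1}-p_i<p_i^{\varepsilon}$ for all sufficiently large $i$.
   Context: $p_i$ denotes the $i$-th prime. For real $x,y$, $\Psi(x,y)$ denotes the number of positive integers $\le x$ all of whose prime factors are $\le y$. *)

From mathcomp Require Import all_boot.
From Stdlib Require Import Reals ZArith.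
Set Implicit Arguments. Unset Strict Implicit. Unset Printing Implicit Defensive.

Lemma next_prime_ex (m : nat) : exists p, (m < p) && prime p.
Proof. case: (prime_above m) => q H1 H2; exists q; by rewrite H1 H2. Qed.

Definition next_prime (m : nat) : nat := ex_minn (next_prime_ex m).

(* p_i = i-th prime, 1-indexed: p 1 = 2, p 2 = 3, ...  (p 0 = 1 is a dummy) *)
Definition p (i : nat) : nat := ssrnat.iter i next_prime 1.

Definition smoothb (y : R) (n : nat) : bool :=
  all (fun q => if Rle_dec (INR q) y then true else false) (primes n).

Definition Psi (x y : R) : nat :=
  count (smoothb y) (iota 1 (Z.to_nat (Int_part x))).

(* Let q be a large prime, u = q^del with del = min(eps, 1)/2, M ~ 2u, and suppose the
   gap after q is at least u^2. Then (q, q + T M] consists of composites. Cutting it into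
   T blocks of length M, the smooth-number hypothesis gives at least c u numbers that are
   M-smooth in each block, so at least T c u >= 3u in total. Grimm's conjecture assigns
   distinct primes to these numbers, each dividing an M-smooth number and hence at most M,
   so there are at most M + 1 < 3u of them. *)

From mathcomp Require Import all_boot.
From Stdlib Require Import Reals Lra.
From mathcomp Require Import zify.

Lemma next_prime_spec m :
  [/\ (m < next_prime m)%N, prime (next_prime m) &
      forall r, (m < r)%N -> prime r -> (next_prime m <= r)%N].
Proof.
rewrite /next_prime; case: ex_minnP => n /andP[lt_mn pr_n] min_n.
by split=> // r lt_mr pr_r; apply: min_n; rewrite lt_mr pr_r.
Qed.

Lemma pS i : p i.+1 = next_prime (p i).
Proof. by rewrite /p iterS. Qed.

Lemma leq_p i : (i <= p i)%N.
Proof.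
elim: i => [|i IHi] //; rewrite pS.
by case: (next_prime_spec (p i)) => lt_pi _ _; apply: leq_ltn_trans lt_pi.
Qed.

Lemma prime_p i : (0 < i)%N -> prime (p i).
Proof. by case: i => [|i] // _; rewrite pS; case: (next_prime_spec (p i)). Qed.

Lemma smoothb_mono (y1 y2 : R) n : (y1 <= y2)%R -> smoothb y1 n -> smoothb y2 n.
Proof.
move=> le_y /allP smooth_n; apply/allP => q q_n; have := smooth_n q q_n.
by case: (Rle_dec (INR q) y2) => // ?; case: (Rle_dec (INR q) y1) => // ?; lra.
Qed.

Lemma exists_nat_between (r : R) :
  (0 <= r)%R -> exists n : nat, (r <= INR n <= r + 1)%R.
Proof.
move=> r_ge0; have [up_gt up_le] := archimed r.
have up_ge0 : (0 <= up r)%Z by apply/Z.lt_le_incl/lt_IZR; simpl; lra.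
by exists (Z.to_nat (up r)); rewrite INR_IZR_INZ Znat.Z2Nat.id //; lra.
Qed.

Lemma Int_part_INR_add (n M : nat) (r : R) : (0 <= r <= INR M)%R ->
  (n <= Z.to_nat (Int_part (INR n + r)) <= n + M)%N.
Proof.
move=> r_bd; have [fl_le fl_gt] := base_Int_part (INR n + r).
have lo : (Z.of_nat n < Int_part (INR n + r) + 1)%Z.
  by apply: lt_IZR; rewrite -INR_IZR_INZ plus_IZR; simpl; lra.
have hi : (Int_part (INR n + r) <= Z.of_nat (n + M))%Z.
  by apply: le_IZR; rewrite -INR_IZR_INZ -plusE plus_INR; lra.
by apply/andP; split; lia.
Qed.

Lemma Psi_INR n y : Psi (INR n) y = count (smoothb y) (iota 1 n).
Proof.
have := @Int_part_INR_add n 0 0 (conj (Rle_refl 0) (Rle_refl 0)).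
by rewrite /Psi Rplus_0_r addn0 -eqn_leq => /eqP <-.
Qed.

Lemma Psi_add_le (n M : nat) (r y : R) : (0 <= r <= INR M)%R ->
  (Psi (INR n + r) y <= Psi (INR n) y + count (smoothb y) (iota n.+1 M))%N.
Proof.
move=> /(Int_part_INR_add n) bd; rewrite Psi_INR /Psi.
set F := Z.to_nat _ in bd *.
have -> : F = (n + (F - n))%N by lia.
have -> : M = ((F - n) + (M - (F - n)))%N by lia.
by rewrite !iotaD !count_cat add1n leq_add2l leq_addr.
Qed.

Lemma count_iota_blocks_ge (a : pred nat) m M T (v : R) :
  (forall t, (t < T)%N -> (v <= INR (count a (iota (m + t * M) M)))%R) ->
  (INR T * v <= INR (count a (iota m (T * M))))%R.
Proof.
elim: T => [|T IHT] block_ge; first by rewrite Rmult_0_l; apply: pos_INR.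
rewrite mulSnr iotaD count_cat plus_INR S_INR.
have := IHT (fun t lt_tT => block_ge t (ltnW lt_tT)).
have := block_ge T (ltnSn T); lra.
Qed.

Definition grimm_conjecture : Prop :=
  forall n k : nat, (1 <= n)%N -> (1 <= k)%N ->
    (forall i : nat, (1 <= i <= k)%N -> (1 < n + i)%N /\ ~~ prime (n + i)) ->
    exists P : nat -> nat,
      (forall i : nat, (1 <= i <= k)%N -> prime (P i) /\ (P i %| n + i)%N) /\
      (forall i j : nat, (1 <= i <= k)%N -> (1 <= j <= k)%N -> P i = P j -> i = j).

(* The [y]-smooth numbers among [q+1, ..., q+L] get distinct prime factors in [0, y]. *)
Lemma count_smooth_le_distinct_prime_divisors q k L y (P : nat -> nat) :
  (L <= k)%N ->
  (forall i, (1 <= i <= k)%N -> prime (P i) /\ (P i %| q + i)%N) ->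
  (forall i j, (1 <= i <= k)%N -> (1 <= j <= k)%N -> P i = P j -> i = j) ->
  (count (smoothb (INR y)) (iota q.+1 L) <= y.+1)%N.
Proof.
move=> le_Lk P_dvd P_inj; rewrite -size_filter.
set s := filter _ _.
have s_spec m : m \in s -> (q < m <= q + L)%N /\ smoothb (INR y) m.
  by rewrite mem_filter mem_iota => /andP[-> /andP[? ?]]; split=> //; lia.
rewrite -(size_map (fun m => P (m - q))) -(size_iota 0 y.+1).
apply: uniq_leq_size.
  rewrite map_inj_in_uniq ?filter_uniq ?iota_uniq // => m1 m2 /s_spec[? _] /s_spec[? _].
  by move/P_inj; lia.
move=> _ /mapP[m /s_spec [m_bd smooth_m] ->]; rewrite mem_iota.
have [pr_P dvd_P] : prime (P (m - q)) /\ (P (m - q) %| q + (m - q))%N by apply: P_dvd; lia.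
have P_primes : P (m - q) \in primes m.
  by move: dvd_P; rewrite subnKC ?mem_primes ?pr_P => [->|]; rewrite ?andbT; lia.
move/allP: smooth_m => /(_ _ P_primes).
by case: Rle_dec => // le_Py _; have := INR_le _ _ le_Py; lia.
Qed.

Lemma count_smooth_in_prime_gap q L y : grimm_conjecture -> (1 < q)%N ->
  (L <= next_prime q - q.+1)%N ->
  (count (smoothb (INR y)) (iota q.+1 L) <= y.+1)%N.
Proof.
move=> grimm gt1_q le_L; case: (posnP L) => [-> //|L_gt0].
have [lt_q _ min_q] := next_prime_spec q.
have [||i i_bd|P [P_dvd P_inj]] := grimm q (next_prime q - q.+1); try lia.
  split; first lia.
  by apply/negP => /(min_q (q + i)%N (ltac:(lia))); lia.
exact: count_smooth_le_distinct_prime_divisors le_L P_dvd P_inj.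
Qed.

Lemma Rpower_gt0 x y : (0 < Rpower x y)%R.
Proof. exact: exp_pos. Qed.

Lemma Rpower_le_self x e : (1 <= x)%R -> (e <= 1)%R -> (Rpower x e <= x)%R.
Proof. by move=> ? ?; rewrite -{2}(Rpower_1 x); [apply: Rle_Rpower|lra]. Qed.

Lemma le_Rpower_of_Rpower_inv a x d : (0 < a)%R -> (0 < d)%R ->
  (Rpower a (/ d) <= x)%R -> (a <= Rpower x d)%R.
Proof.
move=> a_gt0 d_gt0 le_x.
rewrite -{1}(Rpower_1 a) // -(Rinv_l d); last lra.
rewrite -Rpower_mult; apply: Rle_Rpower_l; first lra.
by split=> //; apply: Rpower_gt0.
Qed.

Section SmoothGap.

Variables (del c X : R).
Hypotheses (del_gt0 : (0 < del)%R) (del_le_half : (2 * del <= 1)%R) (c_gt0 : (0 < c)%R).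
Hypothesis smooth_short_interval : forall x : R, (X <= x)%R ->
  (INR (Psi (x + Rpower x del) (Rpower x del))
   - INR (Psi x (Rpower x del)) >= c * Rpower x del)%R.

Lemma count_smooth_block_ge n M : (X <= INR n)%R -> (Rpower (INR n) del <= INR M)%R ->
  (c * Rpower (INR n) del <= INR (count (smoothb (INR M)) (iota n.+1 M)))%R.
Proof.
move=> le_Xn le_M; set r := Rpower (INR n) del.
have r_bd : (0 <= r <= INR M)%R by split=> //; apply/Rlt_le/Rpower_gt0.
have /leP/le_INR := @Psi_add_le n M r r r_bd; rewrite plus_INR.
have /leP/le_INR : (count (smoothb r) (iota n.+1 M) <= count (smoothb (INR M)) (iota n.+1 M))%N.
  by apply: sub_count => z; apply: smoothb_mono; case: r_bd.
have := smooth_short_interval (INR n) le_Xn; rewrite -/r; lra.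
Qed.

Lemma count_smooth_interval_ge q T M : (0 < q)%N ->
  (X <= INR q)%R -> (T * M <= q)%N -> (Rpower (2 * INR q) del <= INR M)%R ->
  (INR T * (c * Rpower (INR q) del) <= INR (count (smoothb (INR M)) (iota q.+1 (T * M))))%R.
Proof.
move=> q_gt0 le_Xq le_TMq le_M; apply: count_iota_blocks_ge => t lt_tT.
have le_tMq : (t * M <= q)%N by apply: leq_trans le_TMq; apply: leq_mul (ltnW lt_tT) _.
have /leP/le_INR le_tMq_R := le_tMq; rewrite addSn.
set x := (q + t * M)%N.
have x_bd : (INR q <= INR x <= 2 * INR q)%R.
  by rewrite /x plus_INR; have := pos_INR (t * M); lra.
have /ltP/lt_0_INR := q_gt0 => {}q_gt0.
have le_qx : (c * Rpower (INR q) del <= c * Rpower (INR x) del)%R.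
  by apply: Rmult_le_compat_l; [lra|apply: Rle_Rpower_l; lra].
have le_xM : (Rpower (INR x) del <= INR M)%R.
  by apply: Rle_trans le_M; apply: Rle_Rpower_l; lra.
have le_Xx : (X <= INR x)%R by lra.
have := @count_smooth_block_ge x M le_Xx le_xM; lra.
Qed.

Lemma prime_gap_lt q T : grimm_conjecture -> (1 < q)%N ->
  (X <= INR q)%R -> (3 <= INR T * c)%R -> (2 * INR T + 2 <= Rpower (INR q) del)%R ->
  (INR (next_prime q) - INR q < Rpower (INR q) (2 * del))%R.
Proof.
move=> grimm gt1_q le_Xq Tc_ge3 u_ge; set u := Rpower (INR q) del in u_ge.
have q_ge2 : (2 <= INR q)%R by apply: (le_INR 2); apply/leP.
have uu : Rpower (INR q) (2 * del) = (u * u)%R by rewrite -Rpower_plus; congr Rpower; ring.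
have le_uuq : (u * u <= INR q)%R by rewrite -uu; apply: Rpower_le_self; lra.
have T_ge0 := pos_INR T.
rewrite uu; apply: Rnot_le_lt => gap_ge.
have [M M_bd] : exists M : nat, (2 * u <= INR M <= 2 * u + 1)%R.
  by apply: exists_nat_between; lra.
have [lt_q _ _] := next_prime_spec q.
have TM_bd : (INR (T * M) <= INR q)%R /\ (INR (T * M) <= INR (next_prime q - q.+1))%R.
  rewrite mult_INR minus_INR; last lia.
  by rewrite S_INR; split; nra.
have le_TMk : (T * M <= next_prime q - q.+1)%N by apply/leP/INR_le; case: TM_bd.
have le_TMq : (T * M <= q)%N by apply/leP/INR_le; case: TM_bd.
have le_2qM : (Rpower (2 * INR q) del <= INR M)%R.
  rewrite -Rpower_mult_distr; try lra.
  have : (Rpower 2 del <= 2)%R by apply: Rpower_le_self; lra.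
  have := Rpower_gt0 (INR q) del; rewrite -/u; nra.
have /leP/le_INR := @count_smooth_in_prime_gap q (T * M) M grimm gt1_q le_TMk; rewrite S_INR.
have := @count_smooth_interval_ge q T M (ltnW gt1_q) le_Xq le_TMq le_2qM; rewrite -/u.
have : (3 * u <= INR T * c * u)%R by apply: Rmult_le_compat_r; lra.
nra.
Qed.

End SmoothGap.

Theorem corollary1p1 :
  (* Grimm's conjecture *)
  (forall n k : nat, (1 <= n)%N -> (1 <= k)%N ->
     (forall i : nat, (1 <= i <= k)%N -> (1 < n + i)%N /\ ~~ prime (n + i)) ->
     exists P : nat -> nat,
       (forall i : nat, (1 <= i <= k)%N -> prime (P i) /\ (P i %| n + i)%N) /\
       (forall i j : nat, (1 <= i <= k)%N -> (1 <= j <= k)%N -> P i = P j -> i = j)) ->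
  (* smooth numbers in short intervals *)
  (forall eps : R, (0 < eps)%R ->
     exists c : R, (0 < c)%R /\
       exists X : R, forall x : R, (X <= x)%R ->
         (INR (Psi (x + Rpower x eps) (Rpower x eps))
          - INR (Psi x (Rpower x eps)) >= c * Rpower x eps)%R) ->
  forall eps : R, (0 < eps)%R ->
    exists N : nat, forall i : nat, (N <= i)%N ->
      (INR (p i.+1) - INR (p i) < Rpower (INR (p i)) eps)%R.
Proof.
move=> grimm smooth eps eps_gt0.
set del := (Rmin eps 1 / 2)%R.
have [del_gt0 del_le_half del_le_eps] : [/\ 0 < del, 2 * del <= 1 & 2 * del <= eps]%R.
  by have := Rmin_l eps 1; have := Rmin_r eps 1; have := Rmin_pos eps 1 eps_gt0 Rlt_0_1;
     rewrite /del; split; lra.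
have [c [c_gt0 [X smooth_del]]] := smooth del del_gt0.
have [T T_gt] := INR_unbounded (3 / c).
have Tc_ge3 : (3 <= INR T * c)%R by rewrite -(Rmult_1_r 3) -(Rinv_l c); [nra|lra].
have [N /Rmax_Rlt[X_lt pow_lt]] := INR_unbounded (Rmax X (Rpower (2 * INR T + 2) (/ del))).
exists N.+1 => i le_Ni; rewrite pS.
have le_N_pi : (INR N <= INR (p i))%R by apply/le_INR/leP; have := leq_p i; lia.
have gt1_pi : (1 < p i)%N by apply/prime_gt1/prime_p; lia.
apply: Rlt_le_trans
  (@prime_gap_lt del c X del_gt0 del_le_half c_gt0 smooth_del (p i) T grimm gt1_pi _ Tc_ge3 _) _.
- lra.
- by apply: le_Rpower_of_Rpower_inv; [have := pos_INR T; lra|lra|lra].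
- by apply: Rle_Rpower; [apply: (le_INR 1); apply/leP; lia|lra].
Qed.
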